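(* If $(X,d,\ll,\le,\tau)$ is a strongly causal Lorentzian length space, then for each $x\in X$ there exists a neighborhood $V$ of $x$ such that $\tau|_{V\times V}$ is continuous.
   Context: A causal space $(X,\ll,\le)$ is a set $X$ with two transitive relations $\ll,\le$ such that $\le$ is reflexive and $x\ll y\Rightarrow x\le y$; write $p<q$ if $p\le q$ and $p\neq q$. Set $I^+(x)=\{y: x\ll y\}$, $I^-(x)=\{y: y\ll x\}$, $J^+(x)=\{y:x\le y\}$, $J^-(x)=\{y:y\le x\}$. A Lorentzian pre-length space $(X,d,\ll,\le,\tau)$ is a causal space together with a metric $d$ on $X$ and a function $\tau:X\times X\to[0,\infty]$ that is lower semicontinuous with respect to the topology of $d$, satisfies $\tau(x,z)\ge\tau(x,y)+\tau(y,z)$ whenever $x\le y\le z$, $\tau(x,y)=0$ if $x\not\le y$, and $\tau(x,y)>0\iff x\ll y$. All topological notions refer to the metric topology of $d$. A future directed causal (resp. timelike) curve is a non-constant Lipschitz map $\gamma:I\to X$ ($I\subset\mathbb R$ an interval) with $\gamma(s)\le\gamma(t)$ (resp. $\gamma(s)\ll\gamma(t)$) for all $s<t$. For a future directed causal $\gamma:[a,b]\to X$, $L_\tau(\gamma)=\inf\sum_{i=0}^{N-1}\tau(\gamma(t_i),\gamma(t_{i+1}))$ over all partitions $a=t_0<\dots<t_N=b$. The space is causally path connected if whenever $x\le y$ (resp. $x\ll y$) there is a future directed causal (resp. timelike) curve from $x$ to $y$. For open $U\subset X$, $p\le_U q$ means there is a future directed causal curve from $p$ to $q$ with image in $U$.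 A neighborhood $U$ is causally closed if whenever $p_n\le_U q_n$ with $p_n\to p\in U$, $q_n\to q\in U$, then $p\le_U q$; the space is locally causally closed if every point has a causally closed neighborhood. The space is localizable if every $x$ has a neighborhood $\Omega_x$ such that: (i) all causal curves contained in $\Omega_x$ have uniformly bounded $d$-length; (ii) there is a continuous $\omega_x:\Omega_x\times\Omega_x\to[0,\infty)$ such that $(\Omega_x,d|_{\Omega_x\times\Omega_x},\ll|_{\Omega_x},\le|_{\Omega_x},\omega_x)$ is a Lorentzian pre-length space, and $I^\pm(y)\cap\Omega_x\ne\emptyset$ for every $y\in\Omega_x$; (iii) for all $p,q\in\Omega_x$ with $p<q$ there is a future causal curve $\gamma_{p,q}$ from $p$ to $q$ with $L_\tau(\gamma_{p,q})\ge L_\tau(\gamma)$ for every future causal curve $\gamma\subset\Omega_x$ from $p$ to $q$, and $L_\tau(\gamma_{p,q})=\omega_x(p,q)$. A Lorentzian length space is a causally path connected, locally causally closed, localizable Lorentzian pre-length space with $\tau(x,y)=\sup\{L_\tau(\gamma):\gamma$ a future causal curve from $x$ to $y\}$. Strongly causal: the Alexandrov topology (topology with subbase $\{I^+(x)\cap I^-(y):x,y\in X\}$) coincides with the metric topology of $d$. *)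

From Stdlib Require Import Reals Lra List.
From Coquelicot Require Import Coquelicot.
Open Scope R_scope.

Section LorentzianLengthSpaces.
Context {X : Type}.

Definition is_metric (d : X -> X -> R) : Prop :=
  (forall x y, 0 <= d x y) /\
  (forall x y, d x y = 0 <-> x = y) /\
  (forall x y, d x y = d y x) /\
  (forall x y z, d x z <= d x y + d y z).

Definition open_d (d : X -> X -> R) (U : X -> Prop) : Prop :=
  forall x, U x -> exists e, 0 < e /\ forall y, d x y < e -> U y.

Definition nbhd (d : X -> X -> R) (x : X) (N : X -> Prop) : Prop :=
  exists U, open_d d U /\ U x /\ forall y, U y -> N y.

Definition seq_converges (d : X -> X -> R) (p : nat -> X) (l : X) : Prop :=
  forall e, 0 < e -> exists N, forall n, (N <= n)%nat -> d (p n) l < e.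

Fixpoint rsum (f : nat -> R) (n : nat) : R :=
  match n with O => 0 | S k => rsum f k + f k end.
Fixpoint rbsum (f : nat -> Rbar) (n : nat) : Rbar :=
  match n with O => Finite 0 | S k => Rbar_plus (rbsum f k) (f k) end.

Definition Rbar_set_lub (S : Rbar -> Prop) (v : Rbar) : Prop :=
  (forall s, S s -> Rbar_le s v) /\
  (forall w, (forall s, S s -> Rbar_le s w) -> Rbar_le v w).
Definition Rbar_set_glb (S : Rbar -> Prop) (v : Rbar) : Prop :=
  (forall s, S s -> Rbar_le v s) /\
  (forall w, (forall s, S s -> Rbar_le w s) -> Rbar_le w v).

Definition is_interval (I : R -> Prop) : Prop :=
  forall s t u, I s -> I u -> s <= t <= u -> I t.

Definition lipschitz_on (d : X -> X -> R) (I : R -> Prop) (g : R -> X) : Prop :=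
  exists L, 0 <= L /\
    forall s t, I s -> I t -> d (g s) (g t) <= L * Rabs (s - t).

Definition rel_curve_on (d : X -> X -> R) (rel : X -> X -> Prop)
    (I : R -> Prop) (g : R -> X) : Prop :=
  is_interval I /\ lipschitz_on d I g /\
  (exists s t, I s /\ I t /\ g s <> g t) /\
  (forall s t, I s -> I t -> s < t -> rel (g s) (g t)).

Definition causal_curve_on d (le : X -> X -> Prop) I g := rel_curve_on d le I g.
Definition timelike_curve_on d (ll : X -> X -> Prop) I g := rel_curve_on d ll I g.

Definition rel_curve_from_to (d : X -> X -> R) (rel : X -> X -> Prop)
    (g : R -> X) (a b : R) (p q : X) : Prop :=
  a < b /\ rel_curve_on d rel (fun t => a <= t <= b) g /\ g a = p /\ g b = q.

Definition partition (a b : R) (t : nat -> R) (N : nat) : Prop :=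
  (1 <= N)%nat /\ t O = a /\ t N = b /\
  forall i, (i < N)%nat -> t i < t (S i).

Definition is_Ltau (tau : X -> X -> Rbar) (g : R -> X) (a b : R) (v : Rbar) : Prop :=
  Rbar_set_glb
    (fun s => exists t N, partition a b t N /\
        s = rbsum (fun i => tau (g (t i)) (g (t (S i)))) N) v.

Definition is_LPLS_on (A : X -> Prop) (d : X -> X -> R)
    (ll le : X -> X -> Prop) (tau : X -> X -> Rbar) : Prop :=
  (forall x y z, A x -> A y -> A z -> ll x y -> ll y z -> ll x z) /\
  (forall x y z, A x -> A y -> A z -> le x y -> le y z -> le x z) /\
  (forall x, A x -> le x x) /\
  (forall x y, A x -> A y -> ll x y -> le x y) /\
  (forall x y, A x -> A y -> Rbar_le (Finite 0) (tau x y)) /\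
  (forall x y, A x -> A y -> forall r : R, Rbar_lt (Finite r) (tau x y) ->
     exists e, 0 < e /\ forall x' y', A x' -> A y' ->
       d x x' < e -> d y y' < e -> Rbar_lt (Finite r) (tau x' y')) /\
  (forall x y z, A x -> A y -> A z -> le x y -> le y z ->
     Rbar_le (Rbar_plus (tau x y) (tau y z)) (tau x z)) /\
  (forall x y, A x -> A y -> ~ le x y -> tau x y = Finite 0) /\
  (forall x y, A x -> A y -> (Rbar_lt (Finite 0) (tau x y) <-> ll x y)).

Definition causally_path_connected d (ll le : X -> X -> Prop) : Prop :=
  (forall x y, le x y -> x <> y ->
     exists g a b, rel_curve_from_to d le g a b x y) /\
  (forall x y, ll x y -> exists g a b, rel_curve_from_to d ll g a b x y).

Definition le_in (d : X -> X -> R) (le : X -> X -> Prop) (U : X -> Prop) (p q : X) : Prop :=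
  p = q \/ exists g a b, rel_curve_from_to d le g a b p q /\
                         forall t, a <= t <= b -> U (g t).

Definition causally_closed d le (U : X -> Prop) : Prop :=
  forall (p q : nat -> X) (p0 q0 : X),
    (forall n, le_in d le U (p n) (q n)) ->
    seq_converges d p p0 -> seq_converges d q q0 -> U p0 -> U q0 ->
    le_in d le U p0 q0.

Definition locally_causally_closed d le : Prop :=
  forall x, exists U, open_d d U /\ U x /\ causally_closed d le U.

Definition localizable_at d (ll le : X -> X -> Prop) (tau : X -> X -> Rbar) (x : X) : Prop :=
  exists Om : X -> Prop, nbhd d x Om /\
  (* (i) causal curves in Om have uniformly bounded d-length *)
  (exists C, forall I g, causal_curve_on d le I g -> (forall t, I t -> Om (g t)) ->
     forall (t : nat -> R) (N : nat), (forall i, (i <= N)%nat -> I (t i)) ->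
       (forall i, (i < N)%nat -> t i < t (S i)) ->
       rsum (fun i => d (g (t i)) (g (t (S i)))) N <= C) /\
  exists om : X -> X -> R,
  (forall y z, Om y -> Om z -> forall e, 0 < e -> exists dl, 0 < dl /\
     forall y' z', Om y' -> Om z' -> d y y' < dl -> d z z' < dl ->
       Rabs (om y' z' - om y z) < e) /\
  (forall y z, Om y -> Om z -> 0 <= om y z) /\
  is_LPLS_on Om d ll le (fun y z => Finite (om y z)) /\
  (forall y, Om y -> (exists z, Om z /\ ll y z) /\ (exists z, Om z /\ ll z y)) /\
  (forall p q, Om p -> Om q -> le p q -> p <> q ->
     exists g a b, rel_curve_from_to d le g a b p q /\
       is_Ltau tau g a b (Finite (om p q)) /\
       forall g' a' b', rel_curve_from_to d le g' a' b' p q ->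
         (forall t, a' <= t <= b' -> Om (g' t)) ->
         forall w, is_Ltau tau g' a' b' w -> Rbar_le w (Finite (om p q))).

(* tau(x,y) = sup of L_tau over causal curves from x to y, with sup {} := 0 *)
Definition Ltau_values d (le : X -> X -> Prop) (tau : X -> X -> Rbar) (x y : X)
    (v : Rbar) : Prop :=
  exists g a b, rel_curve_from_to d le g a b x y /\ is_Ltau tau g a b v.

Definition intrinsic d (le : X -> X -> Prop) (tau : X -> X -> Rbar) : Prop :=
  forall x y,
    ((exists v, Ltau_values d le tau x y v) /\
       Rbar_set_lub (Ltau_values d le tau x y) (tau x y)) \/
    ((~ exists v, Ltau_values d le tau x y v) /\ tau x y = Finite 0).

Definition is_Lorentzian_length_space d (ll le : X -> X -> Prop) (tau : X -> X -> Rbar) : Prop :=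
  is_metric d /\
  is_LPLS_on (fun _ => True) d ll le tau /\
  causally_path_connected d ll le /\
  locally_causally_closed d le /\
  (forall x, localizable_at d ll le tau x) /\
  intrinsic d le tau.

(* open sets of the topology generated by the subbase {I^+(x) & I^-(y)} *)
Definition alexandrov_open (ll : X -> X -> Prop) (U : X -> Prop) : Prop :=
  forall z, U z -> exists l : list (X * X),
    List.Forall (fun pr => ll (fst pr) z /\ ll z (snd pr)) l /\
    forall w, List.Forall (fun pr => ll (fst pr) w /\ ll w (snd pr)) l -> U w.

Definition strongly_causal d (ll : X -> X -> Prop) : Prop :=
  forall U, alexandrov_open ll U <-> open_d d U.

Definition tau_continuous_on (d : X -> X -> R) (tau : X -> X -> Rbar) (V : X -> Prop) : Prop :=
  forall x y, V x -> V y ->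
    (forall l : R, Rbar_lt (Finite l) (tau x y) -> exists dl, 0 < dl /\
       forall x' y', V x' -> V y' -> d x x' < dl -> d y y' < dl ->
         Rbar_lt (Finite l) (tau x' y')) /\
    (forall u : R, Rbar_lt (tau x y) (Finite u) -> exists dl, 0 < dl /\
       forall x' y', V x' -> V y' -> d x x' < dl -> d y y' < dl ->
         Rbar_lt (tau x' y') (Finite u)).

End LorentzianLengthSpaces.

(* In a strongly causal space every neighbourhood of x contains a finite
   intersection V of timelike diamonds I^+(a) & I^-(b) around x; choose one
   inside a localizing neighbourhood Om. By push-up V is causally convex, so
   every causal curve between two points of V stays in V, hence in Om. There
   the localizing function om bounds L_tau of all such curves and is attained,
   so the intrinsic tau coincides with om on V x V, and om is continuous. *)
From Stdlib Require Import Reals Lra Classical.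
From Coquelicot Require Import Coquelicot.
Open Scope R_scope.

Section TauContinuity.
Context {X : Type} (d : X -> X -> R) (ll le : X -> X -> Prop) (tau : X -> X -> Rbar).

Definition in_diamonds (l : list (X * X)) (w : X) : Prop :=
  List.Forall (fun pr => ll (fst pr) w /\ ll w (snd pr)) l.

Definition causally_convex (V : X -> Prop) : Prop :=
  forall p q z, V p -> V q -> le p z -> le z q -> V z.

Definition continuous2_on (A : X -> Prop) (f : X -> X -> R) : Prop :=
  forall y z, A y -> A z -> forall e, 0 < e -> exists dl, 0 < dl /\
    forall y' z', A y' -> A z' -> d y y' < dl -> d z z' < dl ->
      Rabs (f y' z' - f y z) < e.

Definition Ltau_maximized_on (Om : X -> Prop) (om : X -> X -> R) : Prop :=
  forall p q, Om p -> Om q -> le p q -> p <> q ->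
    exists g a b, rel_curve_from_to d le g a b p q /\
      is_Ltau tau g a b (Finite (om p q)) /\
      forall g' a' b', rel_curve_from_to d le g' a' b' p q ->
        (forall t, a' <= t <= b' -> Om (g' t)) ->
        forall w, is_Ltau tau g' a' b' w -> Rbar_le w (Finite (om p q)).

Section PreLength.
Hypothesis HL : is_LPLS_on (fun _ => True) d ll le tau.

Lemma timelike_causal_trans a p z : ll a p -> le p z -> ll a z.
Proof.
  intros Hap Hpz.
  destruct HL as (_ & _ & _ & Hlle & Hnn & _ & Htri & _ & Hpos).
  apply (Hpos a z I I).
  pose proof (Htri a p z I I I (Hlle a p I I Hap) Hpz) as Hrev.
  apply (Hpos a p I I) in Hap.
  pose proof (Hnn p z I I) as Hpz0.
  destruct (tau a p), (tau p z), (tau a z); simpl in *; try lra; tauto.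
Qed.

Lemma causal_timelike_trans z q b : le z q -> ll q b -> ll z b.
Proof.
  intros Hzq Hqb.
  destruct HL as (_ & _ & _ & Hlle & Hnn & _ & Htri & _ & Hpos).
  apply (Hpos z b I I).
  pose proof (Htri z q b I I I Hzq (Hlle q b I I Hqb)) as Hrev.
  apply (Hpos q b I I) in Hqb.
  pose proof (Hnn z q I I) as Hzq0.
  destruct (tau z q), (tau q b), (tau z b); simpl in *; try lra; tauto.
Qed.

Lemma in_diamonds_causally_convex l : causally_convex (in_diamonds l).
Proof.
  intros p q z Hp Hq Hpz Hzq.
  unfold in_diamonds in *; rewrite List.Forall_forall in *.
  intros pr Hin.
  destruct (Hp pr Hin) as [Hap _], (Hq pr Hin) as [_ Hqb].
  split; [exact (timelike_causal_trans _ _ _ Hap Hpz) |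
          exact (causal_timelike_trans _ _ _ Hzq Hqb)].
Qed.

Lemma tau_eq0_of_not_ll p q : ~ ll p q -> tau p q = Finite 0.
Proof.
  intros Hnll.
  destruct HL as (_ & _ & _ & _ & Hnn & _ & _ & _ & Hpos).
  pose proof (Hnn p q I I) as Hpq0.
  destruct (tau p q) as [r| |] eqn:Et; simpl in Hpq0; try contradiction.
  - destruct (Req_dec r 0) as [->|Hr]; [reflexivity|].
    exfalso; apply Hnll, (Hpos p q I I); rewrite Et; simpl; lra.
  - exfalso; apply Hnll, (Hpos p q I I); rewrite Et; exact I.
Qed.

Lemma causal_curve_between g a b p q :
  rel_curve_from_to d le g a b p q -> forall t, a <= t <= b -> le p (g t) /\ le (g t) q.
Proof.
  intros (Hab & (_ & _ & _ & Hmono) & Ha & Hb) t Ht.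
  destruct HL as (_ & _ & Hrefl & _).
  subst p q; split.
  - destruct (Req_dec t a) as [->|Hta]; [apply Hrefl; exact I | apply Hmono; lra].
  - destruct (Req_dec t b) as [->|Htb]; [apply Hrefl; exact I | apply Hmono; lra].
Qed.

End PreLength.

Lemma finite_tau_diag_eq0 (A : X -> Prop) (f : X -> X -> R) p :
  is_LPLS_on A d ll le (fun y z => Finite (f y z)) -> A p -> f p p = 0.
Proof.
  intros (_ & _ & Hrefl & _ & Hnn & _ & Htri & _) Hp.
  pose proof (Htri p p p Hp Hp Hp (Hrefl p Hp) (Hrefl p Hp)) as Hrev.
  pose proof (Hnn p p Hp Hp) as Hpp0.
  simpl in *; lra.
Qed.

Section Localization.
Variables (Om V : X -> Prop) (om : X -> X -> R).
Hypotheses (HL : is_LPLS_on (fun _ => True) d ll le tau)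
           (Hint : intrinsic d le tau)
           (HLom : is_LPLS_on Om d ll le (fun y z => Finite (om y z)))
           (Hmax : Ltau_maximized_on Om om)
           (HVOm : forall w, V w -> Om w)
           (HVconv : causally_convex V).

Lemma tau_eq_om_causal p q : V p -> V q -> le p q -> p <> q -> tau p q = Finite (om p q).
Proof.
  intros Hp Hq Hpq Hne.
  destruct (Hmax p q (HVOm p Hp) (HVOm q Hq) Hpq Hne) as (g & a & b & Hg & HLg & Hbound).
  destruct (Hint p q) as [[_ [Hub Hleast]] | [Hnone _]].
  - apply Rbar_le_antisym.
    + apply Hleast. intros s (g' & a' & b' & Hg' & HLg').
      apply (Hbound g' a' b' Hg'); [|exact HLg'].
      intros t Ht. apply HVOm.
      destruct (causal_curve_between HL g' a' b' p q Hg' t Ht) as [Hpt Htq].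
      exact (HVconv p q _ Hp Hq Hpt Htq).
    + apply Hub. exists g, a, b; auto.
  - exfalso; apply Hnone. exists (Finite (om p q)), g, a, b; auto.
Qed.

Lemma tau_eq_om_on p q : V p -> V q -> tau p q = Finite (om p q).
Proof.
  intros Hp Hq.
  destruct (classic (le p q)) as [Hpq|Hnpq].
  - destruct (classic (p = q)) as [<-|Hne]; [|exact (tau_eq_om_causal p q Hp Hq Hpq Hne)].
    pose proof (finite_tau_diag_eq0 Om om p HLom (HVOm p Hp)) as Hom0.
    rewrite Hom0; apply (tau_eq0_of_not_ll HL).
    intros Hll. destruct HLom as (_ & _ & _ & _ & _ & _ & _ & _ & Hpos).
    apply (Hpos p p (HVOm p Hp) (HVOm p Hp)) in Hll. simpl in Hll. lra.
  - destruct HL as (_ & _ & _ & _ & _ & _ & _ & Hnle & _).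
    destruct HLom as (_ & _ & _ & _ & _ & _ & _ & Hnle' & _).
    rewrite (Hnle p q I I Hnpq).
    rewrite (Hnle' p q (HVOm p Hp) (HVOm q Hq) Hnpq); reflexivity.
Qed.

End Localization.

Lemma tau_continuous_on_of_eq (Om V : X -> Prop) (om : X -> X -> R) :
  (forall w, V w -> Om w) -> continuous2_on Om om ->
  (forall p q, V p -> V q -> tau p q = Finite (om p q)) ->
  tau_continuous_on d tau V.
Proof.
  intros HVOm Hcont Heq x y Hx Hy.
  rewrite (Heq x y Hx Hy); split; simpl.
  - intros r Hr.
    destruct (Hcont x y (HVOm x Hx) (HVOm y Hy) (om x y - r)) as [dl [Hdl Hd]]; [lra|].
    exists dl; split; [exact Hdl|]. intros x' y' Hx' Hy' Hxx' Hyy'.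
    rewrite (Heq x' y' Hx' Hy'); simpl.
    pose proof (Rabs_def2 _ _ (Hd x' y' (HVOm x' Hx') (HVOm y' Hy') Hxx' Hyy')); lra.
  - intros r Hr.
    destruct (Hcont x y (HVOm x Hx) (HVOm y Hy) (r - om x y)) as [dl [Hdl Hd]]; [lra|].
    exists dl; split; [exact Hdl|]. intros x' y' Hx' Hy' Hxx' Hyy'.
    rewrite (Heq x' y' Hx' Hy'); simpl.
    pose proof (Rabs_def2 _ _ (Hd x' y' (HVOm x' Hx') (HVOm y' Hy') Hxx' Hyy')); lra.
Qed.

Section StrongCausality.
Hypothesis Hsc : strongly_causal d ll.

Lemma in_diamonds_open l : open_d d (in_diamonds l).
Proof. apply Hsc. intros z Hz. exists l; split; auto. Qed.

Lemma strongly_causal_diamonds_nbhd (U : X -> Prop) x :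
  open_d d U -> U x -> exists l, in_diamonds l x /\ forall w, in_diamonds l w -> U w.
Proof. intros HU Hx. exact (proj2 (Hsc U) HU x Hx). Qed.

End StrongCausality.

End TauContinuity.

Theorem proposition3p18 (X : Type) (d : X -> X -> R) (ll le : X -> X -> Prop)
    (tau : X -> X -> Rbar) :
  is_Lorentzian_length_space d ll le tau ->
  strongly_causal d ll ->
  forall x : X, exists V : X -> Prop, nbhd d x V /\ tau_continuous_on d tau V.
Proof.
  intros (_ & HL & _ & _ & Hloc & Hint) Hsc x.
  destruct (Hloc x) as (Om & (U & HUo & HUx & HUOm) & _ & om & Hcont & _ & HLom & _ & Hmax).
  destruct (strongly_causal_diamonds_nbhd d ll Hsc U x HUo HUx) as (l & Hlx & HlU).
  assert (HVOm : forall w, in_diamonds ll l w -> Om w) by auto.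
  exists (in_diamonds ll l); split.
  - exists (in_diamonds ll l); split; [exact (in_diamonds_open d ll Hsc l) | auto].
  - apply (tau_continuous_on_of_eq d tau Om _ om HVOm Hcont).
    apply (tau_eq_om_on d ll le tau Om _ om HL Hint HLom Hmax HVOm).
    exact (in_diamonds_causally_convex d ll le tau HL l).
Qed.
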